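(* With the notation of the context, writing $\mathbf 1=\mathbf 1_{\{|k_1+k_3|<|k_2|\}}$, $$\|\mathbf 1\,\mathrm T^{{\rm b},m}\|^2_{kk_1k_2k_3}\lesssim N_1N_3,\qquad \|\mathbf 1\,\mathrm T^{{\rm b},m}\|^2_{kk_2\to k_1k_3}\lesssim(N_1\wedge N_3)^{1-\frac\alpha2},$$ $$\|\mathbf 1\,\mathrm T^{{\rm b},m}\|^2_{k_1\to kk_2k_3}\lesssim N_3,\qquad \|\mathbf 1\,\mathrm T^{{\rm b},m}\|^2_{k_3\to kk_1k_2}\lesssim N_1.$$
   Context: Fix $\alpha\in(1,2)$, dyadic numbers $1\le N_1,N_2,N_3\le N$, a real number $m$ and a constant $C_0>0$. Let $S$ be the set of $(k,k_1,k_2,k_3)\in\mathbb Z^4$ with $k=k_1-k_2+k_3$, $k_2\notin\{k_1,k_3\}$, $\big||k_1|^\alpha-|k_2|^\alpha+|k_3|^\alpha-|k|^\alpha-m\big|\le C_0$, $|k|\le N$ and $|k_j|\le N_j$ for $j=1,2,3$. The base tensor is $\mathrm T^{{\rm b},m}_{kk_1k_2k_3}=\mathbf 1_S(k,k_1,k_2,k_3)$. For a tensor $H=H_{k_A}$ indexed by $k_A=(k_j)_{j\in A}\in\mathbb Z^A$ and a partition $(B,C)$ of $A$, $\|H\|_{k_B\to k_C}^2=\sup\{\sum_{k_C}|\sum_{k_B}H_{k_A}z_{k_B}|^2:\sum_{k_B}|z_{k_B}|^2=1\}$ (the $\ell^2_{k_B}\to\ell^2_{k_C}$ operator norm); $\|H\|_{k_A}$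 denotes the $\ell^2_{k_A}$ norm. $a\wedge b=\min(a,b)$. $A\lesssim B$ means $A\le CB$ with $C$ depending only on $\alpha$ and $C_0$. *)

From HB Require Import structures.
From mathcomp Require Import all_boot all_order all_algebra.
From mathcomp Require Import all_classical all_reals all_analysis.
Set Implicit Arguments. Unset Strict Implicit. Unset Printing Implicit Defensive.
Import Order.TTheory GRing.Theory Num.Theory.
Local Open Scope ring_scope.

Definition dyadic (n : nat) : Prop := exists j : nat, n = (2 ^ j)%N.

Definition zsum {R : realType} (n : nat) (f : int -> R) : R :=
  \sum_(i < (2 * n).+1) f (i%:Z - n%:Z).

(* |k|^alpha for an integer k (with 0^alpha = 0 for alpha > 0). *)
Definition apow {R : realType} (alpha : R) (k : int) : R :=
  ((`|k|%:~R : R) `^ alpha).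

Definition inS {R : realType} (alpha C0 m : R) (N N1 N2 N3 : nat)
  (k k1 k2 k3 : int) : bool :=
  [&& k == k1 - k2 + k3, k2 != k1, k2 != k3,
      `| apow alpha k1 - apow alpha k2 + apow alpha k3 - apow alpha k - m | <= C0,
      (absz k <= N)%N, (absz k1 <= N1)%N, (absz k2 <= N2)%N & (absz k3 <= N3)%N].

Definition Tb {R : realType} (alpha C0 m : R) (N N1 N2 N3 : nat)
  (k k1 k2 k3 : int) : R :=
  if inS alpha C0 m N N1 N2 N3 k k1 k2 k3 then 1 else 0.

Definition Tr {R : realType} (alpha C0 m : R) (N N1 N2 N3 : nat)
  (k k1 k2 k3 : int) : R :=
  (if (absz (k1 + k3)%R < absz k2)%N then 1 else 0) * Tb alpha C0 m N N1 N2 N3 k k1 k2 k3.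

From HB Require Import structures.
From mathcomp Require Import all_boot all_order all_algebra.
From mathcomp Require Import all_classical all_reals all_analysis.
From mathcomp Require Import ring lra zify.
Import Order.TTheory GRing.Theory Num.Theory numFieldNormedType.Exports.
Local Open Scope ring_scope.

(* The tensor is the indicator of a set, so each bound is a Schur test whose
   row and column sums count lattice points.  Once the variables of a row or
   column are fixed, the constraint k = k1 - k2 + k3 leaves one free variable
   x, and the resonance condition confines phi s x = |x|^alpha + |s - x|^alpha
   to a window of width 2 C0.  The second differences of |x|^alpha are of size
   (|x| + 1)^(alpha - 2), so the increments of phi s grow linearly with the
   distance 2x + 1 - s to the critical point x = s/2.  Hence a window holds
   O(1) points in the region |x| > |s| forced by |k1 + k3| < |k2|, and
   O((N1 /\ N3)^(1 - alpha/2)) points in the box |x| <= N1, |s - x| <= N3. *)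

Section finite_sums.
Context {R : realFieldType}.

Lemma sqr_wsum_le (I : finType) (w z : I -> R) : (forall i, 0 <= w i) ->
  (\sum_i w i * z i) ^+ 2 <= (\sum_i w i) * \sum_i w i * z i ^+ 2.
Proof.
move=> w0; set W := \sum_i w i; set A := \sum_i w i * z i.
set B := \sum_i w i * z i ^+ 2.
have W0 : 0 <= W by apply: sumr_ge0.
have [W0'|Wpos] := eqVneq W 0.
  have w_eq0 i : w i = 0.
    move/eqP: W0'; rewrite psumr_eq0 => [/allP/(_ i)|]; last by move=> j _.
    by rewrite mem_index_enum => /(_ isT)/eqP.
  by rewrite W0' mul0r /A big1 ?expr0n // => i _; rewrite w_eq0 mul0r.
have variance : \sum_i w i * (W * z i - A) ^+ 2 = W * (W * B - A ^+ 2).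
  rewrite (eq_bigr (fun i =>
    W ^+ 2 * (w i * z i ^+ 2) - 2 * W * A * (w i * z i) + A ^+ 2 * w i)).
    by rewrite big_split sumrB /= -!mulr_sumr; rewrite -/A -/B -/W; ring.
  by move=> i _; ring.
have : 0 <= W * (W * B - A ^+ 2).
  by rewrite -variance; apply: sumr_ge0 => i _; rewrite mulr_ge0 ?sqr_ge0.
by rewrite pmulr_rge0 ?subr_ge0 // lt_def Wpos.
Qed.

Lemma schur_test (I J : finType) (H : I -> J -> R) (z : J -> R) (A B : R) :
  0 <= A -> (forall i j, 0 <= H i j) ->
  (forall i, \sum_j H i j <= A) -> (forall j, \sum_i H i j <= B) ->
  \sum_i (\sum_j H i j * z j) ^+ 2 <= A * B * \sum_j z j ^+ 2.
Proof.
move=> A0 H0 rowH colH.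
apply: (@le_trans _ _ (\sum_i A * \sum_j H i j * z j ^+ 2)).
  apply: ler_sum => i _; apply: le_trans (sqr_wsum_le _ (H i) z (H0 i)) _.
  by apply: ler_wpM2r; [apply: sumr_ge0 => j _; rewrite mulr_ge0 ?sqr_ge0 | exact: rowH].
rewrite -mulr_sumr exchange_big -mulrA; apply: ler_wpM2l => //.
rewrite mulr_sumr; apply: ler_sum => j _.
by rewrite -mulr_suml; apply: ler_wpM2r; [exact: sqr_ge0 | exact: colH].
Qed.

End finite_sums.

Section zsum.
Context {R : realType}.
Implicit Types (n : nat) (f g : int -> R).

Definition ind (b : bool) : R := if b then 1 else 0.

Lemma ind_ge0 b : 0 <= ind b.
Proof. by case: b; rewrite /ind. Qed.

Lemma ler_ind (b c : bool) : (b -> c) -> ind b <= ind c.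
Proof. by case: b; case: c => // /(_ isT). Qed.

Lemma eq_zsum n f g : f =1 g -> zsum n f = zsum n g.
Proof. by move=> fg; apply: eq_bigr => i _; apply: fg. Qed.

Lemma ler_zsum n f g : (forall x, f x <= g x) -> zsum n f <= zsum n g.
Proof. by move=> fg; apply: ler_sum => i _; apply: fg. Qed.

Lemma zsum_ge0 n f : (forall x, 0 <= f x) -> 0 <= zsum n f.
Proof. by move=> f0; apply: sumr_ge0 => i _; apply: f0. Qed.

Lemma zsumD n f g : zsum n (fun x => f x + g x) = zsum n f + zsum n g.
Proof. exact: big_split. Qed.

Lemma zsum_cst n (c : R) : zsum n (fun=> c) = (2 * n).+1%:R * c.
Proof. by rewrite /zsum sumr_const card_ord mulr_natl. Qed.

Lemma zsum_cst_le n (c : R) : (0 < n)%N -> 0 <= c -> zsum n (fun=> c) <= 3 * n%:R * c.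
Proof.
move=> n_gt0 c0; rewrite zsum_cst ler_wpM2r // -natr1 natrM.
have : 1 <= n%:R :> R by rewrite ler1n.
lra.
Qed.

Lemma exchange_zsum n1 n2 (F : int -> int -> R) :
  zsum n1 (fun x => zsum n2 (F x)) = zsum n2 (fun y => zsum n1 (F^~ y)).
Proof. exact: exchange_big. Qed.

Lemma exchange_zsum3 n1 n2 n3 (F : int -> int -> int -> R) :
  zsum n1 (fun x => zsum n2 (fun y => zsum n3 (F x y))) =
  zsum n3 (fun w => zsum n1 (fun x => zsum n2 (fun y => F x y w))).
Proof.
rewrite (eq_zsum _ _ (fun x => zsum n3 (fun w => zsum n2 (fun y => F x y w)))).
  exact: exchange_zsum.
by move=> x; apply: exchange_zsum.
Qed.

Lemma zsumN n f : zsum n (fun x => f (- x)) = zsum n f.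
Proof.
rewrite /zsum (reindex_inj rev_ord_inj); apply: eq_bigr => i _ /=.
by congr f; have := ltn_ord i; lia.
Qed.

Lemma zsum_ind_eq_le1 n (e : int) : zsum n (fun x => ind (x == e)) <= 1.
Proof.
rewrite /zsum; case: (pickP (fun i : 'I_(2 * n).+1 => i%:Z - n%:Z == e)) => [i ie|none].
  rewrite (bigD1 i) //= /ind ie big1 ?addr0 // => j ji.
  case: eqP => // je; move/eqP: ji; case; apply: val_inj => /=; move/eqP: ie; lia.
by rewrite big1 // => i _; rewrite /ind none.
Qed.

Lemma zsum_ind_andb_eq n (b : bool) (e : int) :
  zsum n (fun x => ind (b && (x == e))) <= ind b.
Proof.
case: b; first exact: zsum_ind_eq_le1.
by rewrite /zsum big1 ?lexx.
Qed.

Lemma zsum_ind_window n (x0 : int) (d : nat) :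
  zsum n (fun x => ind (`|x - x0| <= d%:Z)) <= (2 * d).+1%:R.
Proof.
elim: d => [|d IH].
  by apply: le_trans (zsum_ind_eq_le1 n x0); apply: ler_zsum => x; apply: ler_ind; lia.
pose e1 := x0 + d.+1%:Z; pose e2 := x0 - d.+1%:Z.
have split_window x : ind (`|x - x0| <= d.+1%:Z)
    <= ind (`|x - x0| <= d%:Z) + ind (x == e1) + ind (x == e2).
  rewrite /ind /e1 /e2; do 4 case: ifP; do ?case: eqP; lra || lia.
apply: le_trans (ler_zsum _ _ _ split_window) _; rewrite !zsumD.
have := zsum_ind_eq_le1 n e1; have := zsum_ind_eq_le1 n e2.
rewrite (_ : (2 * d.+1).+1 = (2 * d).+1 + 2)%N ?natrD; [lra | lia].
Qed.

Lemma zsum_ind_diam n (P : pred int) (D : R) : 0 <= D ->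
  (forall x y, P x -> P y -> x <= y -> (y - x)%:~R <= D) ->
  zsum n (fun x => ind (P x)) <= 2 * D + 1.
Proof.
move=> D0 diamP.
have [[x0 Px0]|noP] := pselect (exists x0, P x0); last first.
  rewrite (eq_zsum n _ (fun=> 0)) ?zsum_cst ?mulr0; first lra.
  by move=> x; rewrite /ind; case: ifP => // Px; case: noP; exists x.
set d := Num.truncn D.
have dD : d%:R <= D by rewrite truncn_le.
apply: (@le_trans _ _ (2 * d).+1%:R); last by rewrite -addn1 natrD natrM; lra.
apply: le_trans (zsum_ind_window n x0 d).
apply: ler_zsum => x; apply: ler_ind => Px.
have near u v : P u -> P v -> u <= v -> v - u <= d%:Z.
  move=> Pu Pv uv; have := diamP u v Pu Pv uv.
  have [k ->] : exists k : nat, v - u = k%:Z by exists `|v - u|%N; rewrite gez0_abs ?subr_ge0.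
  by move=> kD; rewrite lez_nat truncn_ge_nat // -pmulrn.
case: (lerP x0 x) => [x0x|/ltW xx0].
  by have := near _ _ Px0 Px x0x; lia.
by have := near _ _ Px Px0 xx0; lia.
Qed.

Lemma sum_increments_ge (g : int -> R) (d : R) (x : int) (k : nat) :
  (forall z, x <= z < x + k%:Z -> d <= g (z + 1) - g z) ->
  k%:R * d <= g (x + k%:Z) - g x.
Proof.
elim: k => [|k IH] gd; first by rewrite mul0r addr0 subrr.
have := IH (fun z zk => gd z ltac:(lia)); have := gd (x + k%:Z) ltac:(lia).
rewrite (_ : x + k.+1%:Z = x + k%:Z + 1) -?natr1; [lra | lia].
Qed.

Lemma zsum_ind_level_le n (g : int -> R) (P : pred int) (B C d : R) :
  0 < d -> 0 <= C -> (forall x, P x -> `|g x - B| <= C) ->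
  (forall x y z, P x -> P y -> x <= z < y -> d <= g (z + 1) - g z) ->
  zsum n (fun x => ind (P x)) <= 2 * (2 * C / d) + 1.
Proof.
move=> d0 C0 gB gd; apply: zsum_ind_diam => [|x y Px Py xy]; first by apply: divr_ge0; lra.
have [k yk] : exists k : nat, y = x + k%:Z by exists `|y - x|%N; rewrite gez0_abs; lia.
have := sum_increments_ge g d x k (fun z zk => gd x y z Px Py ltac:(lia)).
rewrite -yk (_ : y - x = k%:Z) ?ler_pdivlMr // -?pmulrn; last lia.
have := gB x Px; have := gB y Py; rewrite !ler_norml; lra.
Qed.

Lemma zsum_pairE n1 n2 (F : int -> int -> R) :
  zsum n1 (fun x => zsum n2 (F x)) =
  \sum_(p : 'I_(2 * n1).+1 * 'I_(2 * n2).+1) F (p.1%:Z - n1%:Z) (p.2%:Z - n2%:Z).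
Proof. exact: pair_big. Qed.

Lemma zsum_schur22 (n1 n2 n3 n4 : nat) (H : int -> int -> int -> int -> R)
    (z : int -> int -> R) (A B : R) :
  0 <= A -> (forall x1 x2 y1 y2, 0 <= H x1 x2 y1 y2) ->
  (forall x1 x2, zsum n3 (fun y1 => zsum n4 (H x1 x2 y1)) <= A) ->
  (forall y1 y2, zsum n1 (fun x1 => zsum n2 (fun x2 => H x1 x2 y1 y2)) <= B) ->
  zsum n1 (fun x1 => zsum n2 (fun x2 =>
    (zsum n3 (fun y1 => zsum n4 (fun y2 => H x1 x2 y1 y2 * z y1 y2))) ^+ 2))
  <= A * B * zsum n3 (fun y1 => zsum n4 (fun y2 => z y1 y2 ^+ 2)).
Proof.
move=> A0 H0 rowH colH; rewrite !zsum_pairE.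
under eq_bigr => p _ do rewrite zsum_pairE.
apply: (schur_test _ _
  (fun (p : 'I_(2 * n1).+1 * 'I_(2 * n2).+1) (q : 'I_(2 * n3).+1 * 'I_(2 * n4).+1) =>
     H (p.1%:Z - n1%:Z) (p.2%:Z - n2%:Z) (q.1%:Z - n3%:Z) (q.2%:Z - n4%:Z))
  (fun q => z (q.1%:Z - n3%:Z) (q.2%:Z - n4%:Z))) => //.
  by move=> p; have := rowH (p.1%:Z - n1%:Z) (p.2%:Z - n2%:Z); rewrite zsum_pairE.
by move=> q; have := colH (q.1%:Z - n3%:Z) (q.2%:Z - n4%:Z); rewrite zsum_pairE.
Qed.

Lemma zsum_schur31 (n1 n2 n3 n4 : nat) (H : int -> int -> int -> int -> R)
    (z : int -> R) (A B : R) :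
  0 <= A -> (forall x1 x2 x3 y, 0 <= H x1 x2 x3 y) ->
  (forall x1 x2 x3, zsum n4 (H x1 x2 x3) <= A) ->
  (forall y, zsum n1 (fun x1 => zsum n2 (fun x2 => zsum n3 (fun x3 => H x1 x2 x3 y))) <= B) ->
  zsum n1 (fun x1 => zsum n2 (fun x2 => zsum n3 (fun x3 =>
    (zsum n4 (fun y => H x1 x2 x3 y * z y)) ^+ 2)))
  <= A * B * zsum n4 (fun y => z y ^+ 2).
Proof.
move=> A0 H0 rowH colH; rewrite {1}/zsum.
under eq_bigr => i _ do rewrite zsum_pairE.
rewrite pair_big /=.
apply: (schur_test _ _
  (fun (p : 'I_(2 * n1).+1 * ('I_(2 * n2).+1 * 'I_(2 * n3).+1)) (j : 'I_(2 * n4).+1) =>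
     H (p.1%:Z - n1%:Z) (p.2.1%:Z - n2%:Z) (p.2.2%:Z - n3%:Z) (j%:Z - n4%:Z))
  (fun j => z (j%:Z - n4%:Z))) => //.
  by move=> p; apply: rowH.
move=> j; have := colH (j%:Z - n4%:Z); rewrite {1}/zsum.
by under eq_bigr => i _ do rewrite zsum_pairE; rewrite pair_big.
Qed.

End zsum.

Section powR_convexity.
Context {R : realType}.
Implicit Types (b e x y : R).

Lemma le0_ger_powR e x y : e <= 0 -> 0 < x -> x <= y -> y `^ e <= x `^ e.
Proof.
move=> e0 x0 xy; rewrite -[e]opprK !(powRN _ (- e)) lef_pV2 ?posrE ?powR_gt0 //; last first.
  exact: lt_le_trans xy.
by apply: ge0_ler_powR; rewrite ?oppr_ge0 // nnegrE ltW // (lt_le_trans x0).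
Qed.

Lemma powR_le1 b x : 1 <= x -> b <= 0 -> x `^ b <= 1.
Proof. by move=> x1 b0; have := le0_ger_powR _ _ _ b0 ltr01 x1; rewrite powR1. Qed.

Lemma powR_ge1 b x : 1 <= x -> 0 <= b -> 1 <= x `^ b.
Proof. by move=> x1 b0; have := ler_powR x1 b0; rewrite powRr0. Qed.

Lemma powR_continuous_within b : 0 < b ->
  ({within `[0, +oo[, continuous (fun x : R => x `^ b)}%classic).
Proof.
move=> b0; apply/continuous_within_itvcyP; split.
  move=> x; rewrite in_itv /= andbT => x0.
  by apply/differentiable_continuous/derivable1_diffP/derivable_powR; rewrite in_itv /= x0.
by rewrite powR0 ?gt_eqF //; exact: powR_cvg0.
Qed.

Lemma powR_secant_ge b x y : 0 <= b <= 1 -> 0 < x -> x <= y ->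
  b * (y - x) * y `^ (b - 1) <= y `^ b - x `^ b.
Proof.
move=> /andP[b0 b1] x0; rewrite le_eqVlt => /predU1P[<-|xy].
  by rewrite !subrr mulr0 mul0r.
have deriv t : t \in `]x, y[ -> is_derive t 1 (@powR R ^~ b) (b * t `^ (b - 1)).
  by rewrite in_itv /= => /andP[xt _]; apply: is_derive1_powR; apply: lt_trans xt.
have cont : ({within `[x, y], continuous (@powR R ^~ b)}%classic).
  apply: derivable_within_continuous => t; rewrite in_itv /= => /andP[xt _].
  by apply: ex_derive; apply: is_derive1_powR; apply: lt_le_trans xt.
have [c /[!in_itv] /= /andP[xc cy] ->] := MVT xy deriv cont.
rewrite mulrAC; apply: ler_wpM2r; first by rewrite subr_ge0 ltW.
by apply: ler_wpM2l => //; apply: le0_ger_powR; [lra | exact: lt_trans xc | exact: ltW].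
Qed.

Variable a : R.
Hypotheses (a1 : 1 < a) (a2 : a < 2).

Lemma is_derive_powR_shift (x : R) : 0 < x + 1 ->
  is_derive x 1 (fun t => (t + 1) `^ a) (a * (x + 1) `^ (a - 1)).
Proof.
move=> x1; rewrite -[X in is_derive _ _ _ X]mulr1.
apply: (is_derive1_comp (f := @powR R ^~ a) (g := +%R^~ 1)); first exact: is_derive1_powR.
by rewrite -[X in is_derive _ _ _ X]addr0; apply: is_deriveD.
Qed.

Definition powR_step (t : R) : R := (t + 1) `^ a - t `^ a.

Lemma powR_step_gap (q p M : R) : 0 <= q <= p -> p + 1 <= M ->
  a * (a - 1) * (p - q) * M `^ (a - 2) <= powR_step p - powR_step q.
Proof.
move=> /andP[q0]; rewrite le_eqVlt => /predU1P[<-|qp] pM.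
  by rewrite !subrr mulr0 mul0r.
have a0 : 0 < a by apply: lt_trans a1.
have deriv u : u \in `]q, p[ ->
    is_derive u 1 powR_step (a * (u + 1) `^ (a - 1) - a * u `^ (a - 1)).
  rewrite in_itv /= /powR_step => /andP[qu _].
  by apply: is_deriveB; [apply: is_derive_powR_shift | apply: is_derive1_powR]; lra.
have cont : ({within `[q, p], continuous powR_step}%classic).
  have -> : powR_step = (fun t => (t + 1) `^ a) - @powR R ^~ a by [].
  move=> s; apply: continuousB.
    apply: (derivable_within_continuous (i := `[q, p])) => u; rewrite in_itv /= => /andP[qu _].
    by apply: ex_derive; apply: is_derive_powR_shift; lra.
  apply: (continuous_subspaceW _ (powR_continuous_within _ a0)).
  by move=> u /=; rewrite !in_itv /= andbT => /andP[qu _]; apply: le_trans qu.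
have [c /[!in_itv] /= /andP[qc cp] ->] := MVT qp deriv cont.
have c0 : 0 < c by apply: le_lt_trans qc.
have b01 : 0 <= a - 1 <= 1 by apply/andP; split; move: a1 a2; lra.
have := powR_secant_ge (a - 1) c (c + 1) b01 c0 ltac:(by rewrite lerDl).
rewrite addrAC subrr add0r mulr1 (_ : a - 1 - 1 = a - 2); last by ring.
have : M `^ (a - 2) <= (c + 1) `^ (a - 2) by apply: le0_ger_powR; move: a2; lra.
rewrite -mulrBr mulrAC; move: b01 => /andP[b0 _] Mc secant.
apply: ler_wpM2r; first by rewrite subr_ge0 ltW.
rewrite -mulrA; apply: ler_wpM2l; first exact: ltW.
by apply: le_trans secant; apply: ler_wpM2l.
Qed.

Lemma mul_powR_ge_inv (K V M : R) : 0 < K -> 1 <= M -> M <= K * V ->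
  K^-1 <= V * M `^ (a - 2).
Proof.
move=> K0 M1 MKV.
have V0 : 0 < V by rewrite -(pmulr_rgt0 _ K0); apply: lt_le_trans MKV; apply: lt_le_trans M1.
have Minv : M^-1 <= M `^ (a - 2).
  by rewrite -powR_inv1 ?(le_trans ler01) //; apply: ler_powR => //; move: a1; lra.
have -> : K^-1 = V * (K * V)^-1 by rewrite invfM mulrCA divff ?gt_eqF // mulr1.
apply: ler_wpM2l; first exact: ltW.
apply: le_trans Minv; rewrite lef_pV2 ?posrE // ?mulr_gt0 //.
exact: lt_le_trans M1.
Qed.

Lemma mul_powR_ge_inv_scaled (m V M : R) : 1 <= m -> m `^ (1 - a / 2) <= V -> 1 <= M ->
  M <= V + 2 * m + 1 -> (6 * m `^ (1 - a / 2))^-1 <= V * M `^ (a - 2).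
Proof.
move=> m1 LV M1 MV; set L := m `^ (1 - a / 2) in LV *.
have L1 : 1 <= L by apply: powR_ge1 => //; move: a2; lra.
have [V_big|V_small] := leP (2 * m + 1) V.
  apply: (le_trans _ (mul_powR_ge_inv 2 V M ltac:(lra) M1 ltac:(lra))).
  by rewrite lef_pV2 ?posrE; lra.
have M6m : M <= 6 * m by lra.
have LmL : L * m `^ (a - 2) = L^-1.
  rewrite /L -powRD; last by apply/implyP => _; rewrite gt_eqF // (lt_le_trans ltr01).
  by rewrite -powRN; congr (_ `^ _); field.
have M_pow : 6 `^ (a - 2) * m `^ (a - 2) <= M `^ (a - 2).
  rewrite -powRM; [by apply: le0_ger_powR; [move: a2 | |]; lra | lra | lra].
have six_pow : 6^-1 <= 6 `^ (a - 2) :> R.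
  by rewrite -powR_inv1 //; apply: ler_powR; [|move: a1]; lra.
rewrite invfM -LmL mulrCA.
apply: (@le_trans _ _ (L * M `^ (a - 2))); last by apply: ler_wpM2r; [exact: powR_ge0 | exact: LV].
apply: ler_wpM2l; first lra.
apply: le_trans M_pow; apply: ler_wpM2r; [exact: powR_ge0 | exact: six_pow].
Qed.

End powR_convexity.

Section apow_increments.
Context {R : realType}.
Variable a : R.
Hypotheses (a1 : 1 < a) (a2 : a < 2).

Definition apow_step (x : int) : R := apow a (x + 1) - apow a x.

Lemma apow_stepE (x : int) : 0 <= x -> apow_step x = powR_step a x%:~R.
Proof.
by move=> x0; rewrite /apow_step /powR_step /apow !ger0_norm ?intrD // addr_ge0.
Qed.

Lemma apow_stepNN (x : int) : apow_step (- x - 1) = - apow_step x.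
Proof.
rewrite /apow_step /apow (_ : - x - 1 + 1 = - x); last by ring.
by rewrite normrN (_ : - x - 1 = - (x + 1)) ?normrN; [ring | ring].
Qed.

Lemma apow_step_gap (q p : int) (M : R) : q <= p -> (`|p| + `|q| + 1)%:~R <= M ->
  a * (a - 1) * (p - q)%:~R * M `^ (a - 2) <= apow_step p - apow_step q.
Proof.
move=> qp pqM.
have nonneg (u v : int) : 0 <= u <= v -> (v + 1)%:~R <= M ->
    a * (a - 1) * (v - u)%:~R * M `^ (a - 2) <= apow_step v - apow_step u.
  move=> /andP[u0 uv] vM; rewrite !apow_stepE ?(le_trans u0) // intrB.
  by apply: powR_step_gap => //; [rewrite ler0z ler_int u0 | rewrite -intrD1].
have Mge : forall u : int, (u <= `|p| + `|q| + 1)%R -> u%:~R <= M.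
  by move=> u uM; apply: le_trans pqM; rewrite ler_int.
have mirror x : apow_step x = - apow_step (- x - 1).
  by rewrite -apow_stepNN; congr apow_step; ring.
have [q0|q_neg] := lerP 0 q.
  by apply: nonneg; [rewrite q0 qp | apply: Mge; lia].
have [p_neg|p0] := ltP p 0.
  have := nonneg (- p - 1) (- q - 1) ltac:(apply/andP; split; lia)
    (Mge (- q - 1 + 1) ltac:(lia)).
  by rewrite (mirror p) (mirror q) (_ : - q - 1 - (- p - 1) = p - q); [lra | ring].
have h1 := nonneg 0 p ltac:(apply/andP; split; lia) (Mge (p + 1) ltac:(lia)).
have h2 := nonneg 0 (- q - 1) ltac:(apply/andP; split; lia) (Mge (- q - 1 + 1) ltac:(lia)).
(* Across 0 the increments gain 2 * apow_step 0 = 2, which dominates a (a - 1) M^(a - 2). *)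
have step0 : apow_step 0 = 1.
  by rewrite /apow_step /apow add0r normr0 normr1 powR1 powR0 ?subr0 // gt_eqF // (lt_trans ltr01).
have cM : a * (a - 1) * M `^ (a - 2) <= 2.
  have M1 : 1 <= M by apply: le_trans pqM; rewrite ler1z; lia.
  apply: (@le_trans _ _ (a * (a - 1))); last by move: a1 a2; nra.
  rewrite -[leRHS]mulr1; apply: ler_wpM2l; first by apply: mulr_ge0; move: a1; lra.
  by apply: powR_le1; move: a2; lra.
rewrite (mirror q); move: h1 h2; rewrite !subr0 step0.
rewrite (_ : (p - q)%:~R = p%:~R + (- q - 1)%:~R + 1 :> R); last by rewrite !intrD !intrN; ring.
move: cM; set c := a * (a - 1); set M' := M `^ (a - 2); nra.
Qed.

(* With s = k1 + k3 and k = s - k2 the resonance function of the context is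
   |k1|^alpha + |k3|^alpha - m - phi s k2; with s = k + k2 and k3 = s - k1 it is
   phi s k1 - |k2|^alpha - |k|^alpha - m. *)
Definition phi (s z : int) : R := apow a z + apow a (s - z).

Lemma phiNN (s z : int) : phi (- s) (- z) = phi s z.
Proof. by rewrite /phi /apow normrN (_ : - s - - z = - (s - z)) ?normrN //; ring. Qed.

Lemma phi_stepE (s z : int) :
  phi s (z + 1) - phi s z = apow_step z - apow_step (s - z - 1).
Proof.
rewrite /phi /apow_step (_ : s - z - 1 + 1 = s - z); last by ring.
by rewrite (_ : s - (z + 1) = s - z - 1); [ring | ring].
Qed.

Lemma phi_step_gap (s z : int) (M : R) : s - z - 1 <= z ->
  (`|z| + `|s - z - 1| + 1)%:~R <= M ->
  a * (a - 1) * (2 * z + 1 - s)%:~R * M `^ (a - 2) <= phi s (z + 1) - phi s z.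
Proof.
move=> wz zM; rewrite phi_stepE (_ : 2 * z + 1 - s = z - (s - z - 1)); last by ring.
exact: apow_step_gap.
Qed.

End apow_increments.

Section counting.
Context {R : realType}.
Variable a : R.
Hypotheses (a1 : 1 < a) (a2 : a < 2).

Lemma mulr_subr1_gt0 : 0 < a * (a - 1) :> R.
Proof. by apply: mulr_gt0; move: a1; lra. Qed.

Lemma count_phi_level_outer_pos (n : nat) (s : int) (B C : R) : 0 <= C ->
  zsum n (fun x => ind ((`|s| < x) && (`|phi a s x - B| <= C)))
  <= 2 * (4 * C / (a * (a - 1))) + 1.
Proof.
move=> C0; have c0 := mulr_subr1_gt0.
rewrite (_ : 4 * C / _ = 2 * C / (a * (a - 1) / 2)); last first.
  by rewrite invf_div mulrA; congr (_ * _); ring.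
apply: (zsum_ind_level_le _ (phi a s) _ B) => //; first by apply: divr_gt0.
  by move=> x /andP[].
move=> x y z /andP[sx _] /andP[sy _] /andP[xz zy].
set V := 2 * z + 1 - s; set M := `|z| + `|s - z - 1| + 1.
apply: (le_trans _ (phi_step_gap a a1 a2 s z M%:~R ltac:(lia) (lexx _))).
rewrite -[leRHS]mulrA ler_pM2l //.
apply: (mul_powR_ge_inv a a1) => //; first by rewrite ler1z; lia.
by rewrite (_ : 2 * V%:~R = (2 * V)%:~R) ?ler_int ?intrM //; lia.
Qed.

Lemma count_phi_level_outer (n : nat) (s : int) (B C : R) : 0 <= C ->
  zsum n (fun x => ind ((`|s| < `|x|) && (`|phi a s x - B| <= C)))
  <= 2 * (2 * (4 * C / (a * (a - 1))) + 1).
Proof.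
move=> C0; pose P s' x := (`|s'| < x) && (`|phi a s' x - B| <= C).
apply: (@le_trans _ _ (zsum n (fun x => ind (P s x) + ind (P (- s) (- x))))).
  apply: ler_zsum => x; rewrite /P normrN phiNN /ind.
  by case: ifP => [/andP[sx ->]|_]; do 2 case: ifP => //=; lra || lia.
rewrite zsumD (zsumN n (fun x => ind (P (- s) x))).
have := count_phi_level_outer_pos n s B C C0.
by have := count_phi_level_outer_pos n (- s) B C C0; lra.
Qed.

Lemma count_phi_level_box_far (n N1 N3 : nat) (s : int) (B C : R) :
  0 <= C -> (0 < N1)%N -> (0 < N3)%N ->
  zsum n (fun x => ind [&& `|x| <= N1%:Z, `|s - x| <= N3%:Z,
                          (minn N1 N3)%:R `^ (1 - a / 2) < (2 * x - s)%:~R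
                          & `|phi a s x - B| <= C])
  <= 2 * (12 * C * (minn N1 N3)%:R `^ (1 - a / 2) / (a * (a - 1))) + 1.
Proof.
move=> C0 N1_gt0 N3_gt0; set L := (minn N1 N3)%:R `^ (1 - a / 2).
have c0 := mulr_subr1_gt0.
have m1 : 1 <= (minn N1 N3)%:R :> R by rewrite ler1n; lia.
have L1 : 1 <= L by apply: powR_ge1 => //; move: a2; lra.
rewrite (_ : 12 * C * L / _ = 2 * C / (a * (a - 1) / (6 * L))); last first.
  by rewrite invf_div mulrA; congr (_ * _); ring.
apply: (zsum_ind_level_le _ (phi a s) _ B) => //.
  by apply: divr_gt0 => //; lra.
  by move=> x /and4P[].
move=> x y z /and4P[x1 x3 Lx _] /and4P[y1 y3 _ _] /andP[xz zy].
have Vpos : 0 < 2 * x - s by rewrite -(ltr0z R); apply: le_lt_trans Lx; lra.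
set V := 2 * z + 1 - s; set M := `|z| + `|s - z - 1| + 1.
apply: (le_trans _ (phi_step_gap a a1 a2 s z M%:~R ltac:(lia) (lexx _))).
rewrite -[leRHS]mulrA ler_pM2l //.
apply: (mul_powR_ge_inv_scaled a a1 a2 _ _ _ m1); first apply/ltW/(lt_le_trans Lx).
- by rewrite ler_int; lia.
- by rewrite ler1z; lia.
- have : (M <= V + 2 * (minn N1 N3)%:Z + 1)%R by lia.
  by rewrite -(ler_int R) !intrD intrM.
Qed.

Lemma count_phi_level_box (n N1 N3 : nat) (s : int) (B C : R) :
  0 <= C -> (0 < N1)%N -> (0 < N3)%N ->
  zsum n (fun x => ind [&& `|x| <= N1%:Z, `|s - x| <= N3%:Z & `|phi a s x - B| <= C])
  <= (5 + 48 * C / (a * (a - 1))) * (minn N1 N3)%:R `^ (1 - a / 2).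
Proof.
move=> C0 N1_gt0 N3_gt0; set L := (minn N1 N3)%:R `^ (1 - a / 2).
have c0 := mulr_subr1_gt0.
have L1 : 1 <= L by apply: powR_ge1; [rewrite ler1n; lia | move: a2; lra].
pose Q s' x := [&& `|x| <= N1%:Z, `|s' - x| <= N3%:Z & `|phi a s' x - B| <= C].
pose far s' x := [&& `|x| <= N1%:Z, `|s' - x| <= N3%:Z, L < (2 * x - s')%:~R
                     & `|phi a s' x - B| <= C].
apply: (@le_trans _ _ (zsum n (fun x => ind (Q s x && (`|(2 * x - s)%:~R| <= L))
                                     + ind (far s x) + ind (far (- s) (- x))))).
  apply: ler_zsum => x; rewrite /ind /Q /far normrN phiNN.
  have -> : - s - - x = - (s - x) by ring.
  have -> : 2 * - x - - s = - (2 * x - s) by ring.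
  rewrite normrN intrN.
  case: (`|x| <= N1%:Z) (`|s - x| <= N3%:Z) (`|phi a s x - B| <= C) => [] [] [] /=;
    rewrite ?ler_norml; do ?case: ifP; lra.
rewrite !zsumD (zsumN n (fun x => ind (far (- s) x))).
(* Near x = s/2 the increments of phi s are too small; count that window directly. *)
have near : zsum n (fun x => ind (Q s x && (`|(2 * x - s)%:~R| <= L))) <= 2 * L + 1.
  apply: zsum_ind_diam; first lra.
  move=> x y /andP[_ hx] /andP[_ hy] _; move: hx hy; rewrite !ler_norml.
  have -> : 2 * y - s = 2 * (y - x) + (2 * x - s) by ring.
  by rewrite [(2 * (y - x) + _)%:~R]intrD intrM; lra.
have := count_phi_level_box_far n N1 N3 s B C C0 N1_gt0 N3_gt0.
have := count_phi_level_box_far n N1 N3 (- s) B C C0 N1_gt0 N3_gt0.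
have -> : (5 + 48 * C / (a * (a - 1))) * L = 5 * L + 4 * (12 * C * L / (a * (a - 1))) by ring.
rewrite -/L; lra.
Qed.

End counting.

Section restricted_tensor.
Context {R : realType}.
Context {alpha C0 m : R} {N N1 N2 N3 : nat}.
Hypotheses (a1 : 1 < alpha) (a2 : alpha < 2) (C0_ge0 : 0 <= C0).
Hypotheses (N1_gt0 : (0 < N1)%N) (N3_gt0 : (0 < N3)%N).

Local Notation H := (Tr alpha C0 m N N1 N2 N3).
Local Notation KA := (2 * (2 * (4 * C0 / (alpha * (alpha - 1))) + 1)).
Local Notation KB := (5 + 48 * C0 / (alpha * (alpha - 1))).

Lemma TrE k k1 k2 k3 :
  H k k1 k2 k3
  = ind ((absz (k1 + k3)%R < absz k2)%N && inS alpha C0 m N N1 N2 N3 k k1 k2 k3).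
Proof. by rewrite /Tr /Tb /ind; do 2 case: ifP; rewrite ?mulr1 ?mulr0. Qed.

Lemma Tr_ge0 k k1 k2 k3 : 0 <= H k k1 k2 k3.
Proof. by rewrite TrE ind_ge0. Qed.

Lemma Tr_sqr k k1 k2 k3 : H k k1 k2 k3 ^+ 2 = H k k1 k2 k3.
Proof. by rewrite TrE /ind; case: ifP; rewrite ?expr1n ?expr0n. Qed.

Lemma Tr_sum_k_k2 k1 k3 : zsum N (fun k => zsum N2 (fun k2 => H k k1 k2 k3)) <= KA.
Proof.
rewrite exchange_zsum.
apply: le_trans (count_phi_level_outer alpha a1 a2 N2 (k1 + k3)
  (apow alpha k1 + apow alpha k3 - m) C0 C0_ge0).
apply: ler_zsum => k2; apply: le_trans (zsum_ind_andb_eq N _ (k1 + k3 - k2)).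
apply: ler_zsum => k; rewrite TrE; apply: ler_ind => /andP[k2_big /and5P[/eqP -> _ _ win _]].
rewrite (_ : k1 - k2 + k3 = k1 + k3 - k2) in win *; last by ring.
rewrite eqxx andbT; apply/andP; split; first lia.
rewrite /phi -normrN; apply: le_trans win.
by rewrite le_eqVlt; apply/predU1P; left; congr (`|_|); ring.
Qed.

Lemma Tr_sum_k1_k3 k k2 :
  zsum N1 (fun k1 => zsum N3 (fun k3 => H k k1 k2 k3))
  <= KB * (minn N1 N3)%:R `^ (1 - alpha / 2).
Proof.
apply: le_trans (count_phi_level_box alpha a1 a2 N1 N1 N3 (k + k2)
  (apow alpha k2 + apow alpha k + m) C0 C0_ge0 N1_gt0 N3_gt0).
apply: ler_zsum => k1; apply: le_trans (zsum_ind_andb_eq N3 _ (k + k2 - k1)).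
apply: ler_zsum => k3; rewrite TrE; apply: ler_ind.
move=> /andP[_ /and5P[/eqP -> _ _ win /and4P[_ bk1 _ bk3]]].
rewrite /phi (_ : k1 - k2 + k3 + k2 - k1 = k3) ?eqxx ?andbT; last by ring.
apply/and3P; split; [lia | lia |].
apply: le_trans win.
by rewrite le_eqVlt; apply/predU1P; left; congr (`|_|); ring.
Qed.

Lemma Tr_sum_k1 k k2 k3 : zsum N1 (fun k1 => H k k1 k2 k3) <= 1.
Proof.
apply: le_trans (zsum_ind_eq_le1 N1 (k + k2 - k3)).
apply: ler_zsum => k1; rewrite TrE; apply: ler_ind => /andP[_ /and5P[/eqP -> _ _ _ _]].
by apply/eqP; ring.
Qed.

Lemma Tr_sum_k3 k k1 k2 : zsum N3 (fun k3 => H k k1 k2 k3) <= 1.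
Proof.
apply: le_trans (zsum_ind_eq_le1 N3 (k - k1 + k2)).
apply: ler_zsum => k3; rewrite TrE; apply: ler_ind => /andP[_ /and5P[/eqP -> _ _ _ _]].
by apply/eqP; ring.
Qed.

Lemma KA_gt0 : 0 < KA.
Proof.
have c0 := mulr_subr1_gt0 alpha a1.
have : 0 <= 4 * C0 / (alpha * (alpha - 1)) by apply: divr_ge0; [move: C0_ge0; lra | exact: ltW].
lra.
Qed.

Lemma KB_ge1 : 1 <= KB.
Proof.
have c0 := mulr_subr1_gt0 alpha a1.
have : 0 <= 48 * C0 / (alpha * (alpha - 1)) by apply: divr_ge0; [move: C0_ge0; lra | exact: ltW].
lra.
Qed.

Lemma Tr_hs_norm :
  zsum N (fun k => zsum N1 (fun k1 => zsum N2 (fun k2 => zsum N3 (fun k3 =>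
    H k k1 k2 k3 ^+ 2)))) <= 3 * N1%:R * (3 * N3%:R * KA).
Proof.
have -> : zsum N (fun k => zsum N1 (fun k1 => zsum N2 (fun k2 => zsum N3 (fun k3 =>
    H k k1 k2 k3 ^+ 2)))) =
  zsum N1 (fun k1 => zsum N3 (fun k3 => zsum N (fun k => zsum N2 (fun k2 => H k k1 k2 k3)))).
  rewrite exchange_zsum; apply: eq_zsum => k1; rewrite exchange_zsum3.
  by apply: eq_zsum => k3; apply: eq_zsum => k; apply: eq_zsum => k2; apply: Tr_sqr.
have KA0 := ltW KA_gt0.
apply: (le_trans _ (zsum_cst_le N1 (3 * N3%:R * KA) N1_gt0 _)); last first.
  by apply: mulr_ge0 => //; apply: mulr_ge0.
apply: ler_zsum => k1; apply: (le_trans _ (zsum_cst_le N3 KA N3_gt0 KA0)).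
by apply: ler_zsum => k3; apply: Tr_sum_k_k2.
Qed.

Lemma Tr_norm_k_k2_to_k1_k3 (z : int -> int -> R) :
  zsum N1 (fun k1 => zsum N3 (fun k3 =>
    (zsum N (fun k => zsum N2 (fun k2 => H k k1 k2 k3 * z k k2))) ^+ 2))
  <= KA * (KB * (minn N1 N3)%:R `^ (1 - alpha / 2))
     * zsum N (fun k => zsum N2 (fun k2 => z k k2 ^+ 2)).
Proof.
apply: (zsum_schur22 _ _ _ _ (fun k1 k3 k k2 => H k k1 k2 k3)) => //.
- exact: ltW KA_gt0.
- by move=> *; apply: Tr_ge0.
- exact: Tr_sum_k_k2.
- exact: Tr_sum_k1_k3.
Qed.

Lemma Tr_norm_k1_to_k_k2_k3 (z : int -> R) :
  zsum N (fun k => zsum N2 (fun k2 => zsum N3 (fun k3 =>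
    (zsum N1 (fun k1 => H k k1 k2 k3 * z k1)) ^+ 2)))
  <= 3 * N3%:R * KA * zsum N1 (fun k1 => z k1 ^+ 2).
Proof.
rewrite -[3 * _ * KA]mul1r.
apply: (zsum_schur31 _ _ _ _ (fun k k2 k3 k1 => H k k1 k2 k3)) => //.
- by move=> *; apply: Tr_ge0.
- exact: Tr_sum_k1.
move=> k1; rewrite exchange_zsum3.
apply: (le_trans _ (zsum_cst_le N3 KA N3_gt0 (ltW KA_gt0))).
by apply: ler_zsum => k3; apply: Tr_sum_k_k2.
Qed.

Lemma Tr_norm_k3_to_k_k1_k2 (z : int -> R) :
  zsum N (fun k => zsum N1 (fun k1 => zsum N2 (fun k2 =>
    (zsum N3 (fun k3 => H k k1 k2 k3 * z k3)) ^+ 2)))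
  <= 3 * N1%:R * KA * zsum N3 (fun k3 => z k3 ^+ 2).
Proof.
rewrite -[3 * _ * KA]mul1r.
apply: (zsum_schur31 _ _ _ _ H) => //.
- by move=> *; apply: Tr_ge0.
- exact: Tr_sum_k3.
move=> k3; rewrite exchange_zsum.
apply: (le_trans _ (zsum_cst_le N1 KA N1_gt0 (ltW KA_gt0))).
by apply: ler_zsum => k1; apply: Tr_sum_k_k2.
Qed.

End restricted_tensor.

Lemma dyadic_gt0 n : dyadic n -> (0 < n)%N.
Proof. by case=> j ->; rewrite expn_gt0. Qed.

Theorem lemma2p15 (R : realType) (alpha C0 : R) :
  1 < alpha -> alpha < 2 -> 0 < C0 ->
  exists C : R, 0 < C /\
  forall (N N1 N2 N3 : nat) (m : R),
    dyadic N -> dyadic N1 -> dyadic N2 -> dyadic N3 ->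
    (N1 <= N)%N -> (N2 <= N)%N -> (N3 <= N)%N ->
    let H := Tr alpha C0 m N N1 N2 N3 in
    (* ||1 T||^2_{k k1 k2 k3} <~ N1 N3 *)
    zsum N (fun k => zsum N1 (fun k1 => zsum N2 (fun k2 => zsum N3 (fun k3 =>
        (H k k1 k2 k3) ^+ 2))))
      <= C * (N1%:R * N3%:R)
    (* ||1 T||^2_{k k2 -> k1 k3} <~ (N1 /\ N3)^(1 - alpha/2) *)
    /\ (forall z : int -> int -> R,
        zsum N1 (fun k1 => zsum N3 (fun k3 =>
          (zsum N (fun k => zsum N2 (fun k2 => H k k1 k2 k3 * z k k2))) ^+ 2))
        <= C * ((minn N1 N3)%:R `^ (1 - alpha / 2))
             * zsum N (fun k => zsum N2 (fun k2 => (z k k2) ^+ 2)))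
    (* ||1 T||^2_{k1 -> k k2 k3} <~ N3 *)
    /\ (forall z : int -> R,
        zsum N (fun k => zsum N2 (fun k2 => zsum N3 (fun k3 =>
          (zsum N1 (fun k1 => H k k1 k2 k3 * z k1)) ^+ 2)))
        <= C * N3%:R * zsum N1 (fun k1 => (z k1) ^+ 2))
    (* ||1 T||^2_{k3 -> k k1 k2} <~ N1 *)
    /\ (forall z : int -> R,
        zsum N (fun k => zsum N1 (fun k1 => zsum N2 (fun k2 =>
          (zsum N3 (fun k3 => H k k1 k2 k3 * z k3)) ^+ 2)))
        <= C * N1%:R * zsum N3 (fun k3 => (z k3) ^+ 2)).
Proof.
move=> a1 a2 C0_gt0; have C0_ge0 := ltW C0_gt0.
have KA_pos := KA_gt0 a1 C0_ge0; have KB1 := KB_ge1 a1 C0_ge0.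
set KA := 2 * _ in KA_pos; set KB := 5 + _ in KB1.
have absorb (x : R) : 0 <= x -> 0 <= KA * x /\ KA * x <= KA * KB * x.
  move=> x0; split; first by apply: mulr_ge0 => //; exact: ltW.
  by rewrite -mulrA ler_pM2l // ler_peMl.
exists (9 * KA * KB); split; first by move: KA_pos KB1; nra.
move=> N N1 N2 N3 m _ /dyadic_gt0 N1_gt0 _ /dyadic_gt0 N3_gt0 _ _ _ H; rewrite {}/H.
have sum_sqr_ge0 n (z : int -> R) : 0 <= zsum n (fun k => z k ^+ 2).
  by apply: zsum_ge0 => k; apply: sqr_ge0.
split; [|split; [|split]].
- apply: le_trans (Tr_hs_norm a1 a2 C0_ge0 N1_gt0 N3_gt0) _; rewrite -/KA.
  by have [] := absorb (N1%:R * N3%:R) (mulr_ge0 (ler0n _ _) (ler0n _ _)); lra.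
- move=> z; apply: le_trans (Tr_norm_k_k2_to_k1_k3 a1 a2 C0_ge0 N1_gt0 N3_gt0 z) _.
  set S := zsum N _; rewrite -/KA -/KB.
  have S0 : 0 <= S by apply: zsum_ge0 => k; apply: sum_sqr_ge0.
  have [] := absorb (KB * (minn N1 N3)%:R `^ (1 - alpha / 2) * S).
    by rewrite !mulr_ge0 ?powR_ge0 // (le_trans ler01).
  lra.
- move=> z; apply: le_trans (Tr_norm_k1_to_k_k2_k3 a1 a2 C0_ge0 N1_gt0 N3_gt0 z) _.
  by have [] := absorb _ (mulr_ge0 (ler0n _ N3) (sum_sqr_ge0 N1 z)); rewrite -/KA; lra.
- move=> z; apply: le_trans (Tr_norm_k3_to_k_k1_k2 a1 a2 C0_ge0 N1_gt0 N3_gt0 z) _.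
  by have [] := absorb _ (mulr_ge0 (ler0n _ N1) (sum_sqr_ge0 N3 z)); rewrite -/KA; lra.
Qed.
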